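(* Let $S_f=\{f_i\ge 0: i=1,\ldots,m_1\}$ and $S_g=\{g_i\ge0: i=1,\ldots,m_2\}$ be two pure inequality sets in the variables $\mathbf{x}=(x_1,\ldots,x_n)$, and let $S_{f'}$ and $S_{g'}$ be minimal characterization sets of $S_f$ and $S_g$ respectively. If $S_f$ and $S_g$ are equivalent, then $S_{f'}$ and $S_{g'}$ are trivially equivalent.
   Context: An inequality set is a finite set $S=\{f_i\ge 0: i=1,\ldots,m\}$ with each $f_i$ a nonzero homogeneous linear polynomial in $\mathbf{x}$ with real coefficients; its solutions are the points of $\mathbb{R}^n$ satisfying all inequalities; a subset of $S$ is an inequality set whose polynomials form a subset of $\{f_1,\ldots,f_m\}$. The equality $f_k=0$ is an implied equality of $S$ if $f_k(\mathbf{x})=0$ for every solution of $S$; $S$ is pure if it has no implied equalities. Inequalities $f_1\ge0,\ldots,f_k\ge0$ imply $f\ge0$ if every $\mathbf{x}$ satisfying the former satisfies $f(\mathbf{x})\ge0$; an inequality of a set is redundant if implied by the other inequalities of the set. Two inequality sets are equivalent if they have the same solution set. A subset $S'$ of $S$ is a minimal characterization set of $S$ if $S'$ is equivalent to $S$ and contains no redundant inequality. Two inequalities $f\ge0$ and $g\ge 0$ are trivially equivalent if $f=c\,g$ for some real $c>0$. Two inequality sets $S_f, S_g$ are trivially equivalent if they have the same number of inequalities, every inequality of $S_f$ is trivially equivalent to some inequality of $S_g$, and every inequality of $S_g$ is trivially equivalent to some inequality of $S_f$. *)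

From HB Require Import structures.
From mathcomp Require Import all_boot all_order all_algebra.
From mathcomp Require Import finmap.
From mathcomp Require Import reals.
Set Implicit Arguments. Unset Strict Implicit. Unset Printing Implicit Defensive.
Import Order.TTheory GRing.Theory Num.Theory.
Local Open Scope ring_scope.
Local Open Scope fset_scope.

Section Ineq.
Variables (R : realType) (n : nat).

(* A homogeneous linear polynomial a_1 x_1 + ... + a_n x_n is represented by
   its coefficient vector a : 'rV[R]_n. *)
Definition lin_eval (f x : 'rV[R]_n) : R := \sum_(i < n) f 0 i * x 0 i.

(* an inequality set: a finite set of nonzero homogeneous linear forms f,
   each standing for the inequality f >= 0 *)
Definition ineq_set (S : {fset 'rV[R]_n}) : Prop := forall f, f \in S -> f != 0.

Definition solution (S : {fset 'rV[R]_n}) (x : 'rV[R]_n) : Prop :=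
  forall f, f \in S -> 0 <= lin_eval f x.

Definition implied_equality (S : {fset 'rV[R]_n}) (f : 'rV[R]_n) : Prop :=
  f \in S /\ forall x, solution S x -> lin_eval f x = 0.

Definition pure (S : {fset 'rV[R]_n}) : Prop :=
  forall f, ~ implied_equality S f.

Definition implies (S : {fset 'rV[R]_n}) (f : 'rV[R]_n) : Prop :=
  forall x, solution S x -> 0 <= lin_eval f x.

Definition redundant (S : {fset 'rV[R]_n}) (f : 'rV[R]_n) : Prop :=
  f \in S /\ implies (S `\ f) f.

Definition equivalent (S T : {fset 'rV[R]_n}) : Prop :=
  forall x, solution S x <-> solution T x.

Definition minimal_characterization (S' S : {fset 'rV[R]_n}) : Prop :=
  [/\ S' `<=` S, equivalent S' S & forall f, ~ redundant S' f].

Definition triv_equiv_ineq (f g : 'rV[R]_n) : Prop :=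
  exists c : R, 0 < c /\ f = c *: g.

Definition triv_equiv_set (S T : {fset 'rV[R]_n}) : Prop :=
  [/\ #|` S| = #|` T|,
      forall f, f \in S -> exists2 g, g \in T & triv_equiv_ineq f g
    & forall g, g \in T -> exists2 f, f \in S & triv_equiv_ineq g f].

End Ineq.

From HB Require Import structures.
From mathcomp Require Import all_boot all_order all_algebra.
From mathcomp Require Import finmap.
From mathcomp Require Import reals.
From mathcomp Require Import boolp.
Set Implicit Arguments. Unset Strict Implicit. Unset Printing Implicit Defensive.
Import Order.TTheory GRing.Theory Num.Theory.
Local Open Scope fset_scope.
Local Open Scope ring_scope.

(* Let S be irredundant with a strictly feasible point y (any subset of a pure
   set has one).  For f in S, a solution x0 of S minus f with f x0 < 0 is moved
   towards y to a point z where f vanishes and every other form of S is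
   positive.  Near z the solution set of S is the half-space f >= 0, so any
   equivalent set T contains a form vanishing at z (otherwise z - f/M would
   solve T but not S), and that form cuts out the same half-space, hence is a
   positive multiple of f.  Distinct forms of an irredundant set are never
   positive multiples of each other, so between two equivalent irredundant
   sets this correspondence is a bijection. *)

Section LinearInequalities.
Variables (R : realType) (n : nat).
Implicit Types (f g h w x y z : 'rV[R]_n) (S T U : {fset 'rV[R]_n}).

Lemma lin_evalC f x : lin_eval f x = lin_eval x f.
Proof. by apply: eq_bigr => i _; rewrite mulrC. Qed.

Lemma lin_evalDr f x y : lin_eval f (x + y) = lin_eval f x + lin_eval f y.
Proof. by rewrite /lin_eval -big_split; apply: eq_bigr => i _; rewrite mxE mulrDr. Qed.

Lemma lin_evalZr f a x : lin_eval f (a *: x) = a * lin_eval f x.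
Proof. by rewrite /lin_eval mulr_sumr; apply: eq_bigr => i _; rewrite mxE mulrCA. Qed.

Lemma lin_evalZl a f x : lin_eval (a *: f) x = a * lin_eval f x.
Proof. by rewrite lin_evalC lin_evalZr lin_evalC. Qed.

Lemma lin_evalNr f x : lin_eval f (- x) = - lin_eval f x.
Proof. by rewrite -scaleN1r lin_evalZr mulN1r. Qed.

Lemma lin_eval0r f : lin_eval f 0 = 0.
Proof. by rewrite -(scale0r 0) lin_evalZr mul0r. Qed.

Lemma lin_eval_sumr f (r : seq 'rV[R]_n) (F : 'rV[R]_n -> 'rV[R]_n) :
  lin_eval f (\sum_(k <- r) F k) = \sum_(k <- r) lin_eval f (F k).
Proof. exact: (big_morph _ (lin_evalDr f) (lin_eval0r f)). Qed.

Lemma lin_eval_delta f j : lin_eval f (delta_mx 0 j) = f 0 j.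
Proof.
rewrite /lin_eval (bigD1 j) //= big1 ?addr0; first by rewrite mxE !eqxx mulr1.
by move=> i /negbTE ij; rewrite mxE ij andbF mulr0.
Qed.

Lemma lin_eval_inj f g : (forall x, lin_eval f x = lin_eval g x) -> f = g.
Proof. by move=> fg; apply/matrixP => i j; rewrite (ord1 i) -!lin_eval_delta fg. Qed.

Lemma lin_eval_self_gt0 f : f != 0 -> 0 < lin_eval f f.
Proof.
move=> fn0; have sq_ge0 i : 0 <= f 0 i * f 0 i by rewrite -expr2 sqr_ge0.
rewrite lt_def sumr_ge0 // andbT; apply: contra fn0 => /eqP /psumr_eq0P f0.
apply/eqP/rowP => j; rewrite mxE.
by apply/eqP; rewrite -sqrf_eq0 expr2; apply/eqP/f0.
Qed.

Lemma halfspace_ge0_kernel f g :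
  (forall w, 0 <= lin_eval f w -> 0 <= lin_eval g w) ->
  forall u, lin_eval f u = 0 -> lin_eval g u = 0.
Proof.
move=> fg u fu; apply/eqP; rewrite eq_le fg ?fu // andbT.
by rewrite -oppr_ge0 -lin_evalNr fg // lin_evalNr fu oppr0.
Qed.

Lemma halfspace_sub_scale f g : f != 0 -> g != 0 ->
  (forall w, 0 <= lin_eval f w -> 0 <= lin_eval g w) ->
  exists2 c, 0 < c & g = c *: f.
Proof.
move=> fn0 gn0 fg; have ff_gt0 := lin_eval_self_gt0 fn0.
pose c := lin_eval g f / lin_eval f f.
have gE : g = c *: f.
  apply: lin_eval_inj => w; rewrite lin_evalZl.
  pose u := w - (lin_eval f w / lin_eval f f) *: f.
  have fu : lin_eval f u = 0.
    by rewrite lin_evalDr lin_evalNr lin_evalZr mulfVK ?subrr // gt_eqF.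
  move/eqP: (halfspace_ge0_kernel fg fu).
  rewrite /u lin_evalDr lin_evalNr lin_evalZr subr_eq0 => /eqP ->.
  by rewrite /c mulrC mulrA [RHS]mulrAC.
exists c => //; rewrite lt_def divr_ge0 ?fg ?ltW // andbT.
by apply: contra gn0 => /eqP c0; rewrite gE c0 scale0r.
Qed.

Lemma triv_equiv_ineq_sym f g : triv_equiv_ineq f g -> triv_equiv_ineq g f.
Proof.
case=> c [c_gt0 ->]; exists c^-1; split; first by rewrite invr_gt0.
by rewrite scalerA mulVf ?scale1r // gt_eqF.
Qed.

Lemma equivalent_sym S T : equivalent S T -> equivalent T S.
Proof. by move=> ST x; rewrite ST. Qed.

Lemma equivalent_trans S T U : equivalent S T -> equivalent T U -> equivalent S U.
Proof. by move=> ST TU x; rewrite ST TU. Qed.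

Lemma ineq_set_sub S T : S `<=` T -> ineq_set T -> ineq_set S.
Proof. by move=> /fsubsetP ST T0 f /ST /T0. Qed.

Lemma pure_strict_solution S : pure S ->
  exists y, forall h, h \in S -> 0 < lin_eval h y.
Proof.
move=> Spure.
have witness h : exists x, h \in S -> solution S x /\ 0 < lin_eval h x.
  apply: contrapT => no_x; apply: (Spure h); split.
    by apply: contrapT => hS; apply: no_x; exists 0.
  move=> x Sx; apply/eqP; rewrite eq_le leNgt; apply/andP; split.
    by apply/negP => hx; apply: no_x; exists x.
  by apply: Sx; apply: contrapT => hS; apply: no_x; exists 0.
have [xs Hxs] := choice witness.
exists (\sum_(k <- S) xs k) => h hS.
rewrite lin_eval_sumr (bigD1_seq h) ?fset_uniq //=.
apply: ltr_pwDl; first by case: (Hxs h hS).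
rewrite big_seq_cond sumr_ge0 // => k /andP[kS _].
by case: (Hxs k kS) => + _; apply.
Qed.

Lemma solution_shift U z w : solution U z ->
  (forall g, g \in U -> lin_eval g z = 0 -> 0 <= lin_eval g w) ->
  exists M, solution U (M *: z + w).
Proof.
move=> Uz active.
(* the terms with lin_eval h z = 0 vanish, as x / 0 = 0 *)
exists (\sum_(h <- U) `|lin_eval h w| / lin_eval h z) => g gU.
rewrite lin_evalDr lin_evalZr.
have [gz0|gz_neq0] := eqVneq (lin_eval g z) 0.
  by rewrite gz0 mulr0 add0r active.
have gz_gt0 : 0 < lin_eval g z by rewrite lt_def gz_neq0 Uz.
set M := \sum_(h <- U) _.
have ratio_le : `|lin_eval g w| / lin_eval g z <= M.
  rewrite /M (bigD1_seq g) ?fset_uniq //= lerDl big_seq_cond.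
  by rewrite sumr_ge0 // => h /andP[hU _]; rewrite divr_ge0 ?Uz.
rewrite -lerBlDr sub0r (le_trans (ler_norm _)) // normrN.
by rewrite -ler_pdivrMr.
Qed.

Lemma irredundant_boundary_point S f y : f \in S -> ~ redundant S f ->
  (forall h, h \in S -> 0 < lin_eval h y) ->
  exists z, [/\ solution S z, lin_eval f z = 0
             & forall h, h \in S -> lin_eval h z = 0 -> h = f].
Proof.
move=> fS f_irr y_int.
have [x0 [x0_sol fx0_lt0]] :
    exists x0, solution (S `\ f) x0 /\ lin_eval f x0 < 0.
  apply: contrapT => no_x0; apply: f_irr; split => // x Sx.
  by rewrite leNgt; apply/negP => fx; apply: no_x0; exists x.
pose z := lin_eval f y *: x0 - lin_eval f x0 *: y.
have fz : lin_eval f z = 0.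
  by rewrite lin_evalDr lin_evalNr !lin_evalZr mulrC subrr.
have others_gt0 h : h \in S -> h != f -> 0 < lin_eval h z.
  move=> hS hf; rewrite lin_evalDr lin_evalNr !lin_evalZr -mulNr.
  apply: ltr_wpDl.
    by rewrite mulr_ge0 ?(ltW (y_int f fS)) // x0_sol // !inE hf.
  by rewrite mulr_gt0 ?oppr_gt0 ?y_int.
exists z; split=> // [h hS|h hS hz]; have [->|hf] := eqVneq h f.
- by rewrite fz.
- exact/ltW/others_gt0.
- by [].
- by move: (others_gt0 h hS hf); rewrite hz ltxx.
Qed.

Lemma irredundant_triv_equiv S T f y : ineq_set S -> ineq_set T ->
  (forall h, h \in S -> 0 < lin_eval h y) -> equivalent S T ->
  f \in S -> ~ redundant S f -> exists2 g, g \in T & triv_equiv_ineq f g.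
Proof.
move=> S0 T0 y_int ST fS f_irr.
have [z [Sz fz only_f]] := irredundant_boundary_point fS f_irr y_int.
have Tz : solution T z by apply/ST.
case: (pselect (exists2 g, g \in T & lin_eval g z = 0)) => [[g gT gz]|no_g].
  exists g => //; apply: triv_equiv_ineq_sym.
  have [|c c_gt0 ->] := halfspace_sub_scale (S0 f fS) (T0 g gT); last by exists c.
  move=> w fw; have [|M /ST SMzw] := solution_shift (w := w) Sz.
    by move=> h hS /(only_f h hS) ->.
  by move: (SMzw g gT); rewrite lin_evalDr lin_evalZr gz mulr0 add0r.
have [|M /ST SMzf] := solution_shift (w := - f) Tz.
  by move=> g gT gz; case: no_g; exists g.
move: (SMzf f fS); rewrite lin_evalDr lin_evalZr fz mulr0 add0r lin_evalNr.
by rewrite oppr_ge0 leNgt lin_eval_self_gt0 ?S0.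
Qed.

Lemma triv_equiv_redundant S f g : f \in S -> g \in S -> f != g ->
  triv_equiv_ineq f g -> redundant S f.
Proof.
move=> fS gS fg [c [c_gt0 fE]]; split=> // x Sx.
by rewrite fE lin_evalZl (mulr_ge0 (ltW c_gt0)) // Sx // !inE eq_sym fg.
Qed.

Lemma irredundant_card_le S T : (forall f, ~ redundant S f) ->
  (forall f, f \in S -> exists2 g, g \in T & triv_equiv_ineq f g) ->
  (#|` S| <= #|` T|)%N.
Proof.
move=> S_irr ST.
have pick f : exists g, f \in S -> g \in T /\ triv_equiv_ineq f g.
  case: (pselect (f \in S)) => [fS|]; last by exists 0.
  by have [g gT fg] := ST f fS; exists g.
have [phi phiP] := choice pick.
have phi_inj : {in S &, injective phi}.
  move=> f1 f2 f1S f2S phi12; apply: contrapT => /eqP f12; apply: (S_irr f1).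
  apply: (triv_equiv_redundant f1S f2S f12).
  have [_ [c1 [c1_gt0 f1E]]] := phiP f1 f1S.
  have [_ /triv_equiv_ineq_sym [c2 [c2_gt0 phi2E]]] := phiP f2 f2S.
  exists (c1 * c2); split; first by rewrite mulr_gt0.
  by rewrite f1E phi12 phi2E scalerA.
have /card_in_imfsetP/eqP <- := phi_inj; rewrite fsubset_leq_card //.
by apply/fsubsetP => _ /imfsetP[f /= fS ->]; case: (phiP f fS).
Qed.

End LinearInequalities.

Theorem theorem4 (R : realType) (n : nat) (Sf Sg Sf' Sg' : {fset 'rV[R]_n}) :
  ineq_set Sf -> ineq_set Sg -> pure Sf -> pure Sg ->
  minimal_characterization Sf' Sf -> minimal_characterization Sg' Sg ->
  equivalent Sf Sg ->
  triv_equiv_set Sf' Sg'.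
Proof.
move=> Sf0 Sg0 /pure_strict_solution [yf yf_int].
move=> /pure_strict_solution [yg yg_int].
move=> [sub_f eq_f irr_f] [sub_g eq_g irr_g] eq_fg.
have Sf'0 := ineq_set_sub sub_f Sf0; have Sg'0 := ineq_set_sub sub_g Sg0.
have yf_int' h : h \in Sf' -> 0 < lin_eval h yf by move/(fsubsetP sub_f)/yf_int.
have yg_int' h : h \in Sg' -> 0 < lin_eval h yg by move/(fsubsetP sub_g)/yg_int.
have eq' : equivalent Sf' Sg'.
  exact: equivalent_trans eq_f (equivalent_trans eq_fg (equivalent_sym eq_g)).
have fg f : f \in Sf' -> exists2 g, g \in Sg' & triv_equiv_ineq f g.
  by move=> fS; apply: (irredundant_triv_equiv Sf'0 Sg'0 yf_int' eq' fS).
have gf g : g \in Sg' -> exists2 f, f \in Sf' & triv_equiv_ineq g f.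
  move=> gS; have eq'_sym := equivalent_sym eq'.
  exact: (irredundant_triv_equiv Sg'0 Sf'0 yg_int' eq'_sym gS).
split=> //; apply/eqP; rewrite eqn_leq.
by rewrite !irredundant_card_le.
Qed.
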